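(* In the network $N$ described in the context, with $3f<n\le 5f$ and $n-f$ odd, suppose the robots run a deterministic cautious algorithm that solves Byzantine convergence with up to $f$ Byzantine robots in the ATOM model under a fully asynchronous scheduler. Then for every distance $d$ with $0<d<B-A$ and every $Border\in\{A,B\}$, the adversary procedure $G2B2(Border,d)$ terminates.
   Context: Model: robots on the real line in the ATOM model (each activated robot performs a full Look–Compute–Move cycle atomically). Robots are anonymous (same deterministic program), oblivious, have no common orientation, and have unlimited visibility with strong multiplicity detection. Byzantine robots behave arbitrarily, with positions chosen by the adversary. A fully asynchronous scheduler only guarantees that each robot is activated infinitely often. Byzantine convergence: for every $\epsilon>0$ there is a time after which all correct robots are pairwise within distance $\epsilon$. Cautious algorithm: every computed destination of a correct robot lies in the range of the correct robots' positions in its last observation. In addition, whenever the correct robots are not colocated, some correct robot later has destination different from its position. Network $N$: $n$ robots, exactly $f$ Byzantine, and $A<B$. - $SetA$: $f$ correct robots at $A$. - $SetB$: $f$ correct robots at $B$. - $SetX$: $n-3f$ correct robots at a common point $X\in(A,B)$. Procedure $G2B2(Border,d)$: first place $(n-3f+1)/2$ Byzantine robots at $Border$ and $(5f-n-1)/2$ Byzantine robots at $X$. Then, while the distance between $X$ and $Border$ exceeds $d$, repeat the following steps. 1. Activate simultaneously all robots at $X$, let them move to their computed destination $D$, and set $X\leftarrow D$. 2. Move one Byzantine robot from $Border$ to $X$. 3. Activate simultaneously all robots at $X$, let them move to their computed destination $D$, and set $X\leftarrow D$. 4. Move one Byzantine robot from $X$ to $Border$. *)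

From HB Require Import structures.
From mathcomp Require Import all_boot all_order all_algebra.
From mathcomp Require Import reals.
Set Implicit Arguments. Unset Strict Implicit. Unset Printing Implicit Defensive.
Import Order.TTheory GRing.Theory Num.Theory.
Local Open Scope ring_scope.

Section Model.
Variable R : realType.
Variable n : nat.

(* A deterministic algorithm, common to all (anonymous, oblivious) robots:
   it maps the observed multiset of positions (sorted list, expressed in the
   robot's local frame: the robot is at the origin, orientation chosen by the
   adversary) to a destination in that local frame. *)
Definition algorithm := seq R -> R.

Definition config := 'I_n -> R.

(* orientation of a local frame: false = same as global, true = reversed *)
Definition sgn (o : bool) : R := if o then -1 else 1.

(* observation (with strong multiplicity detection, unlimited visibility,
   anonymous robots) taken at position x with local orientation o *)
Definition observe (p : config) (x : R) (o : bool) : seq R :=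
  sort <=%R [seq sgn o * (p j - x) | j <- enum 'I_n].

Definition destAt (alg : algorithm) (p : config) (x : R) (o : bool) : R :=
  x + sgn o * alg (observe p x o).

Definition dest (alg : algorithm) (p : config) (i : 'I_n) (o : bool) : R :=
  destAt alg p (p i) o.

(* An ATOM execution under a fully asynchronous (fair) scheduler, for the
   Byzantine set Byz: pos t is the configuration at time t, act t i says
   whether robot i is activated at step t, fr t i is its local orientation. *)
Definition execution (alg : algorithm) (Byz : {set 'I_n}) (pos : nat -> config)
    (act : nat -> 'I_n -> bool) (fr : nat -> 'I_n -> bool) : Prop :=
  (forall t i, i \notin Byz ->
     pos t.+1 i = if act t i then dest alg (pos t) i (fr t i) else pos t i)
  /\ (forall i, i \notin Byz -> forall t, exists2 t', (t <= t')%N & act t' i).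

Definition in_correct_range (Byz : {set 'I_n}) (p : config) (y : R) : Prop :=
  exists j k, [/\ j \notin Byz, k \notin Byz & p j <= y <= p k].

Definition colocated (Byz : {set 'I_n}) (p : config) : Prop :=
  forall i j, i \notin Byz -> j \notin Byz -> p i = p j.

Definition solves_convergence (f : nat) (alg : algorithm) : Prop :=
  forall Byz : {set 'I_n}, (#|Byz| <= f)%N ->
  forall pos act fr, execution alg Byz pos act fr ->
  forall eps : R, 0 < eps -> exists T, forall t, (T <= t)%N ->
  forall i j, i \notin Byz -> j \notin Byz -> `|pos t i - pos t j| < eps.

Definition cautious (f : nat) (alg : algorithm) : Prop :=
  forall Byz : {set 'I_n}, (#|Byz| <= f)%N ->
  forall pos act fr, execution alg Byz pos act fr ->
  (forall t i, i \notin Byz -> act t i ->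
     in_correct_range Byz (pos t) (dest alg (pos t) i (fr t i)))
  /\ (forall t, ~ colocated Byz (pos t) ->
      exists t', (t <= t')%N /\ exists i, [/\ i \notin Byz, act t' i &
                 dest alg (pos t') i (fr t' i) != pos t' i]).

(* The network N: robots 0..f-1 (SetA, correct) at A, f..2f-1 (SetB, correct)
   at B, 2f..n-f-1 (SetX, correct) at X, and the f Byzantine robots
   n-f..n-1, of which the first k are at Border and the others at X. *)
Definition netconf (f : nat) (A B X Border : R) (k : nat) : config :=
  fun i => if (i < f)%N then A else if (i < 2 * f)%N then B
           else if (i < n - f)%N then X
           else if (i < n - f + k)%N then Border else X.

(* number of Byzantine robots initially placed at Border: (n-3f+1)/2
   (the remaining f - (n-3f+1)/2 = (5f-n-1)/2 are placed at X) *)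
Definition kB (f : nat) : nat := (n - 3 * f + 1) %/ 2.

(* value of X at the start of the m-th iteration of the loop of
   G2B2(Border, d); o j is the orientation used by the robots at X in the
   j-th activation (all robots at X, activated together, see the same thing
   and use the same frame, hence compute the same destination D). *)
Fixpoint g2b2_X (alg : algorithm) (f : nat) (A B X0 Border : R)
    (o : nat -> bool) (m : nat) : R :=
  match m with
  | 0 => X0
  | m'.+1 =>
      let x := g2b2_X alg f A B X0 Border o m' in
      let x1 := destAt alg (netconf f A B x Border (kB f)) x (o (2 * m')%N) in
      (* step 2: one Byzantine robot moves from Border to X;  step 3 *)
      let x2 := destAt alg (netconf f A B x1 Border (kB f).-1) x1
                  (o (2 * m').+1) in
      (* step 4: one Byzantine robot moves back from X to Border *)
      x2
  end.

(* G2B2(Border, d) terminates: the loop condition |X - Border| > d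
   fails at the start of some iteration. *)
Definition g2b2_terminates (alg : algorithm) (f : nat) (A B X0 Border d : R)
    (o : nat -> bool) : Prop :=
  exists m, `|g2b2_X alg f A B X0 Border o m - Border| <= d.

End Model.

From HB Require Import structures.
From mathcomp Require Import all_boot all_order all_algebra.
From mathcomp Require Import reals.
From mathcomp Require Import zify ring.
Set Implicit Arguments. Unset Strict Implicit. Unset Printing Implicit Defensive.
Import Order.TTheory GRing.Theory Num.Theory.

(* Say Border is the position [near] of the f robots of one end group, and
   let 2k = n - 3f + 1.  Replay G2B2 in an execution where the f robots of
   the far group are Byzantine while the k Byzantine robots sitting at
   Border are correct: the f + k robots at Border then look exactly like
   the X group after one Byzantine robot has moved onto X (up to a mirror
   image, and provided the far group is placed at the reflection of its
   real position).  So the odd steps of G2B2 are performed by the Border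
   group, in the reversed frame, moving by the opposite amount; translating
   the whole picture by the accumulated [drift] keeps X - Border as in
   G2B2.  Every correct robot moves infinitely often, so convergence forces
   |X - Border| < d eventually. *)

Lemma map_iota_in_const (T : Type) (h : nat -> T) (x : T) (a l : nat) :
  (forall i, (a <= i < a + l)%N -> h i = x) -> map h (iota a l) = nseq l x.
Proof.
elim: l a => [|l IHl] a hx //=.
rewrite hx; last by lia.
by rewrite IHl // => i hi; apply: hx; lia.
Qed.

Lemma count_iota_in_const (P : pred nat) (b : bool) (a l : nat) :
  (forall i, (a <= i < a + l)%N -> P i = b) -> count P (iota a l) = (b * l)%N.
Proof. by move=> hP; rewrite -[LHS](count_map P id) (map_iota_in_const hP) count_nseq. Qed.

Local Open Scope ring_scope.

Definition shift (R : realType) n (p : config R n) (c : R) : config R n :=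
  fun i => p i + c.

Lemma sgn_negb (R : realType) (o : bool) : sgn R (~~ o) = - sgn R o.
Proof. by case: o; rewrite /sgn ?opprK. Qed.

Section Observations.
Variables (R : realType) (n : nat) (alg : algorithm R).

Lemma observe_shift (p : config R n) c x o :
  observe (shift p c) (x + c) o = observe p x o.
Proof.
by rewrite /observe; congr sort; apply: eq_map => j; rewrite /shift; congr (_ * _); ring.
Qed.

Lemma destAt_shift (p : config R n) c x o :
  destAt alg (shift p c) (x + c) o = destAt alg p x o + c.
Proof. by rewrite /destAt observe_shift addrAC. Qed.

Lemma destAt_reversed (p q : config R n) x y o :
  observe p x (~~ o) = observe q y o ->
  destAt alg p x (~~ o) = x + y - destAt alg q y o.
Proof. by rewrite /destAt sgn_negb => ->; ring. Qed.

Variable f : nat.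
Hypothesis f3_lt_n : (3 * f < n)%N.

Lemma map_netconf (T : Type) (g : R -> T) (u0 u1 x b : R) k : (k <= f)%N ->
  [seq g (@netconf R n f u0 u1 x b k j) | j <- enum 'I_n] =
  nseq f (g u0) ++ nseq f (g u1) ++ nseq (n - 3 * f) (g x) ++ nseq k (g b)
    ++ nseq (f - k) (g x).
Proof.
move=> k_le_f.
pose h i := g (if (i < f)%N then u0 else if (i < 2 * f)%N then u1
  else if (i < n - f)%N then x else if (i < n - f + k)%N then b else x).
transitivity [seq h i | i <- iota 0 n]; first by rewrite -val_enum_ord -map_comp.
have -> : iota 0 n = iota 0 (f + (f + (n - 3 * f + (k + (f - k))))).
  by congr iota; lia.
by rewrite !iotaD !map_cat; congr cat; [|congr cat; [|congr cat; [|congr cat]]];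
  apply: map_iota_in_const => i /andP[lo hi]; rewrite /h;
  repeat case: ifP => ?; try lia.
Qed.

Lemma observe_netconf (u0 u1 x b : R) k y o : (k <= f)%N ->
  let g u := sgn R o * (u - y) in
  observe (@netconf R n f u0 u1 x b k) y o =
  sort <=%R (nseq f (g u0) ++ nseq f (g u1) ++ nseq (n - 3 * f) (g x)
    ++ nseq k (g b) ++ nseq (f - k) (g x)).
Proof. by move=> k_le_f g; rewrite /observe -map_netconf. Qed.

Lemma observe_netconfC (u0 u1 x b : R) k y o : (k <= f)%N ->
  observe (@netconf R n f u0 u1 x b k) y o =
  observe (@netconf R n f u1 u0 x b k) y o.
Proof.
move=> k_le_f; rewrite !observe_netconf //.
by apply/perm_sortP; [exact: le_total|exact: le_trans|exact: le_anti|];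
  rewrite perm_catCA.
Qed.

Lemma observe_netconf_mirror (near far y : R) k o :
  (0 < k <= f)%N -> (2 * k = n - 3 * f + 1)%N ->
  observe (@netconf R n f near (y + near - far) y near k) near (~~ o) =
  observe (@netconf R n f near far y near k.-1) y o.
Proof.
move=> k_bounds k_balance; rewrite !observe_netconf; try lia.
apply/perm_sortP; [exact: le_total|exact: le_trans|exact: le_anti|].
apply/permP => a; rewrite !count_cat !count_nseq sgn_negb.
have -> : - sgn R o * (near - near) = sgn R o * (y - y) by ring.
have -> : - sgn R o * (y + near - far - near) = sgn R o * (far - y) by ring.
have -> : - sgn R o * (y - near) = sgn R o * (near - y) by ring.
by case: (a _); case: (a _); case: (a _); lia.
Qed.

End Observations.

Lemma kB_double n f : (3 * f < n)%N -> odd (n - f) -> (2 * kB n f = n - 3 * f + 1)%N.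
Proof. by move=> f3_lt_n odd_nf; have := modn2 (n - f); rewrite odd_nf /kB; lia. Qed.

Lemma g2b2_XC (R : realType) n f alg (A B X0 Bo : R) o m :
  (3 * f < n)%N -> (kB n f <= f)%N ->
  g2b2_X n alg f A B X0 Bo o m = g2b2_X n alg f B A X0 Bo o m.
Proof.
move=> f3_lt_n k_le_f.
elim: m => //= m ->; rewrite /destAt !(observe_netconfC f3_lt_n A B) //.
lia.
Qed.

Section Simulation.
Variables (R : realType) (n f : nat) (alg : algorithm R) (o : nat -> bool).
Variables (near far x0 : R).
Hypotheses (f3_lt_n : (3 * f < n)%N) (k_bounds : (0 < kB n f <= f)%N).
Hypothesis k_balance : (2 * kB n f = n - 3 * f + 1)%N.

Local Notation k := (kB n f).
Local Notation conf := (@netconf R n f).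

Definition near_robot (i : nat) := ((i < f) || (n - f <= i < n - f + k))%N.
Definition x_robot (i : nat) := ((2 * f <= i < n - f) || (n - f + k <= i))%N.
Definition sim_byz : {set 'I_n} := [set i : 'I_n | (f <= i < 2 * f)%N].

Lemma card_sim_byz : (#|sim_byz| <= f)%N.
Proof.
rewrite cardsE cardE /enum_mem size_filter -enumT.
have -> : count (mem (fun i : 'I_n => f <= i < 2 * f)%N) (enum 'I_n) =
          count (fun i => f <= i < 2 * f)%N (iota 0 n).
  by rewrite -val_enum_ord count_map.
have -> : iota 0 n = iota 0 (f + (f + (n - 2 * f))) by congr iota; lia.
rewrite !iotaD !count_cat (@count_iota_in_const _ false) => [|i]; last by lia.
rewrite (@count_iota_in_const _ true) => [|i]; last by lia.
by rewrite (@count_iota_in_const _ false) => [|i]; lia.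
Qed.

Lemma correct_near_or_x (i : 'I_n) : i \notin sim_byz -> near_robot i || x_robot i.
Proof. by rewrite inE /near_robot /x_robot; have := ltn_ord i; lia. Qed.

Lemma netconf_near (u u1 x : R) (i : 'I_n) : near_robot i -> conf u u1 x u k i = u.
Proof. by rewrite /netconf /near_robot; repeat case: ifP => ?; try lia. Qed.

Lemma netconf_x (u0 u1 x b : R) (i : 'I_n) : x_robot i -> conf u0 u1 x b k i = x.
Proof. by rewrite /netconf /x_robot; repeat case: ifP => ?; try lia. Qed.

Definition X_at m := g2b2_X n alg f near far x0 near o m.
Definition D_at m := destAt alg (conf near far (X_at m) near k) (X_at m) (o (2 * m)%N).

Fixpoint drift m := if m is m'.+1 then drift m' + D_at m' - X_at m'.+1 else 0.

Definition even_conf m := shift (conf near far (X_at m) near k) (drift m).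
Definition odd_conf m := shift (conf near (D_at m + near - far) (D_at m) near k) (drift m).

Definition sim_pos t := if odd t then odd_conf t./2 else even_conf t./2.
Definition sim_act t (i : 'I_n) := if odd t then near_robot i else x_robot i.
Definition sim_frame t (i : 'I_n) := if odd t then ~~ o t else o t.

Lemma sim_even_step m (i : 'I_n) : i \notin sim_byz ->
  odd_conf m i = if x_robot i then dest alg (even_conf m) i (o (2 * m)%N)
                 else even_conf m i.
Proof.
move=> /correct_near_or_x correct_i; case: ifP => x_i.
  by rewrite /dest /even_conf /odd_conf /shift !netconf_x // destAt_shift.
have near_i : near_robot i by move: correct_i; rewrite x_i orbF.
by rewrite /even_conf /odd_conf /shift !netconf_near.
Qed.

Lemma sim_odd_step m (i : 'I_n) : i \notin sim_byz ->
  even_conf m.+1 i = if near_robot i then dest alg (odd_conf m) i (~~ o (2 * m).+1)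
                     else odd_conf m i.
Proof.
move=> /correct_near_or_x correct_i; case: ifP => near_i.
  rewrite /dest /even_conf /odd_conf /shift !netconf_near // destAt_shift.
  have mirror := observe_netconf_mirror f3_lt_n near far (D_at m) (o (2 * m).+1)
    k_bounds k_balance.
  rewrite (destAt_reversed _ mirror) /=.
  by rewrite [X_at m.+1]/X_at /=; ring.
have x_i : x_robot i by move: correct_i; rewrite near_i.
by rewrite /even_conf /odd_conf /shift !netconf_x //=; ring.
Qed.

Lemma sim_execution : execution alg sim_byz sim_pos sim_act sim_frame.
Proof.
have odd_2m m : odd (2 * m) = false by rewrite mul2n odd_double.
have odd_2m1 m : odd (2 * m).+1 by rewrite /= odd_2m.
have half_2m m : (2 * m)./2 = m by rewrite mul2n half_double.
have half_2m1 m : (2 * m).+1./2 = m by rewrite /= mul2n uphalf_double.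
split=> [t i correct_i|i /correct_near_or_x correct_i t].
- have [m [-> | ->]] : exists m, t = (2 * m)%N \/ t = (2 * m).+1.
    by exists t./2; have := odd_double_half t; case: (odd t); [right|left]; lia.
  + by rewrite /sim_pos /sim_act /sim_frame odd_2m1 odd_2m half_2m1 half_2m -sim_even_step.
  + have -> : (2 * m).+2 = (2 * m.+1)%N by lia.
    by rewrite /sim_pos /sim_act /sim_frame odd_2m1 odd_2m half_2m1 half_2m -sim_odd_step.
- have [near_i | x_i] := orP correct_i.
  + by exists (2 * t).+1; [lia | rewrite /sim_act odd_2m1].
  + by exists (2 * t)%N; [lia | rewrite /sim_act odd_2m].
Qed.

Lemma g2b2_terminates_near d : 0 < d -> solves_convergence n f alg ->
  g2b2_terminates n alg f near far x0 near d o.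
Proof.
move=> d_gt0 convergence.
have [T close_T] := convergence _ card_sim_byz _ _ _ sim_execution d d_gt0.
exists T.
have x_lt_n : (2 * f < n)%N by lia.
have near_lt_n : (0 < n)%N by lia.
have x_correct : Ordinal x_lt_n \notin sim_byz by rewrite inE /=; lia.
have near_correct : Ordinal near_lt_n \notin sim_byz by rewrite inE /=; lia.
have := close_T (2 * T)%N (leq_pmull _ (ltn0Sn 1)) _ _ x_correct near_correct.
rewrite /sim_pos mul2n odd_double half_double /even_conf /shift.
rewrite netconf_x ?netconf_near; try (rewrite /x_robot /near_robot /=; lia).
by rewrite opprD addrACA subrr addr0 => /ltW.
Qed.

End Simulation.

Theorem lemma3 (R : realType) (n f : nat) (A B X : R) (alg : algorithm R) :
  (3 * f < n)%N -> (n <= 5 * f)%N -> odd (n - f) ->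
  A < B -> A < X -> X < B ->
  cautious n f alg -> solves_convergence n f alg ->
  forall d : R, 0 < d -> d < B - A ->
  forall Border : R, Border = A \/ Border = B ->
  forall o : nat -> bool, g2b2_terminates n alg f A B X Border d o.
Proof.
move=> f3_lt_n n_le_5f odd_nf _ _ _ _ convergence d d_gt0 _ Border border_end o.
have k_balance := kB_double f3_lt_n odd_nf.
have k_bounds : (0 < kB n f <= f)%N by lia.
case: border_end => ->; first exact: g2b2_terminates_near.
have [m close_m] :=
  g2b2_terminates_near o B A X f3_lt_n k_bounds k_balance d_gt0 convergence.
by exists m; rewrite g2b2_XC //; case/andP: k_bounds.
Qed.
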